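(* Let $(D,\sqsubseteq)$ be a dcpo with its Scott topology, let $B\subseteq D$, and let $A\in\mathbf{\Delta}^0_2(D)$. Then every $\sqsubseteq$-increasing $B$-tree $f:T\to B$ that is $(A,\varepsilon)$-alternating for some $\varepsilon\in\{0,1\}$ is well-founded.
   Context: Dcpo: poset where every nonempty directed subset has a supremum; Scott topology: open sets are upsets $O$ such that every directed set with supremum in $O$ meets $O$. $\mathbf{\Sigma}^0_2(D)$: countable unions of differences $U\setminus V$ of Scott open sets; $\mathbf{\Pi}^0_2(D)$: complements; $\mathbf{\Delta}^0_2(D)=\mathbf{\Sigma}^0_2(D)\cap\mathbf{\Pi}^0_2(D)$. A tree is a nonempty set of finite sequences (over some set) closed under prefixes; it is well-founded if it has no infinite branch (no infinite sequence all of whose finite prefixes lie in $T$). A $B$-tree is a map $f:T\to B$ with $T$ a tree. It is $(A,\varepsilon)$-alternating if ($f(\mathit{nil})\in A$ iff $\varepsilon=1$) and for all $\sigma,\sigma a\in T$ (where $\sigma a$ is $\sigma$ extended by one element $a$), $f(\sigma a)\in A\iff f(\sigma)\notin A$. It is $\sqsubseteq$-increasing if $f(\sigma)\sqsubseteq f(\sigma a)$ whenever $\sigma,\sigma a\in T$. *)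

From Stdlib Require Import List.
Import ListNotations.

Set Implicit Arguments.

Section Order.
Variable D : Type.
Variable le : D -> D -> Prop.

Definition is_partial_order : Prop :=
  (forall x, le x x) /\
  (forall x y, le x y -> le y x -> x = y) /\
  (forall x y z, le x y -> le y z -> le x z).

Definition directed (S : D -> Prop) : Prop :=
  (exists x, S x) /\
  (forall x y, S x -> S y -> exists z, S z /\ le x z /\ le y z).

Definition is_sup (S : D -> Prop) (s : D) : Prop :=
  (forall x, S x -> le x s) /\
  (forall u, (forall x, S x -> le x u) -> le s u).

Definition is_dcpo : Prop :=
  is_partial_order /\
  (forall S, directed S -> exists s, is_sup S s).

Definition scott_open (O : D -> Prop) : Prop :=
  (forall x y, O x -> le x y -> O y) /\
  (forall S s, directed S -> is_sup S s -> O s -> exists x, S x /\ O x).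

Definition Sigma02 (X : D -> Prop) : Prop :=
  exists (U V : nat -> D -> Prop),
    (forall n, scott_open (U n)) /\ (forall n, scott_open (V n)) /\
    (forall x, X x <-> exists n, U n x /\ ~ V n x).

Definition Pi02 (X : D -> Prop) : Prop :=
  Sigma02 (fun x => ~ X x).

Definition Delta02 (X : D -> Prop) : Prop := Sigma02 X /\ Pi02 X.
End Order.

Section Trees.
Variable Sg : Type.

(* a tree: nonempty set of finite sequences closed under prefixes;
   sigma a is represented as sigma ++ [a] *)
Definition is_tree (T : list Sg -> Prop) : Prop :=
  (exists s, T s) /\ (forall s t, T (s ++ t) -> T s).

Definition prefix_of (g : nat -> Sg) (n : nat) : list Sg := map g (seq 0 n).

Definition tree_well_founded (T : list Sg -> Prop) : Prop :=
  ~ exists g : nat -> Sg, forall n, T (prefix_of g n).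

Variable D : Type.

Definition is_B_tree (B : D -> Prop) (T : list Sg -> Prop) (f : list Sg -> D) : Prop :=
  is_tree T /\ (forall s, T s -> B (f s)).

(* eps = true stands for epsilon = 1, eps = false for epsilon = 0 *)
Definition alternating (A : D -> Prop) (eps : bool) (T : list Sg -> Prop)
  (f : list Sg -> D) : Prop :=
  (A (f nil) <-> eps = true) /\
  (forall s a, T s -> T (s ++ [a]) -> (A (f (s ++ [a])) <-> ~ A (f s))).

Definition increasing (le : D -> D -> Prop) (T : list Sg -> Prop)
  (f : list Sg -> D) : Prop :=
  forall s a, T s -> T (s ++ [a]) -> le (f s) (f (s ++ [a])).
End Trees.

(* An infinite branch g of the tree yields an increasing chain
   x n = f (g|n) which, by alternation, enters and leaves A at every step.
   The range of a chain is directed, so it has a supremum s.  Now s lies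
   either in A or in its complement, and both are Sigma^0_2.  A Sigma^0_2 set
   containing the supremum of a chain contains a whole tail of the chain:
   some difference U \ V with U, V Scott open contains s; U is inaccessible
   by directed suprema, so some x m lies in U and then every later x j does,
   while no x j lies in V since V is an upper set not containing s >= x j.
   A tail staying inside A (or outside A) contradicts alternation. *)

From Stdlib Require Import List Lia Classical.
Import ListNotations.

Set Implicit Arguments.

Section Chains.
Variable D : Type.
Variable le : D -> D -> Prop.
Hypothesis le_refl : forall x, le x x.
Hypothesis le_trans : forall x y z, le x y -> le y z -> le x z.

Definition range (x : nat -> D) : D -> Prop := fun d => exists n, d = x n.

Definition chain (x : nat -> D) : Prop := forall n, le (x n) (x (S n)).

Lemma chain_monotone (x : nat -> D) :
  chain x -> forall i j, i <= j -> le (x i) (x j).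
Proof. intros Hx i j Hij. induction Hij; eauto. Qed.

Lemma chain_directed (x : nat -> D) : chain x -> directed le (range x).
Proof.
  intros Hx. split.
  - exists (x 0). exists 0. reflexivity.
  - intros a b [i ->] [j ->]. exists (x (Nat.max i j)).
    split; [exists (Nat.max i j); reflexivity |].
    split; apply chain_monotone; auto; lia.
Qed.

(* A Sigma^0_2 set containing the supremum of a chain contains a tail of it:
   only this inaccessibility property is needed, not the full dcpo axioms. *)
Lemma sigma02_contains_tail (X : D -> Prop) (x : nat -> D) (s : D) :
  Sigma02 le X -> chain x -> is_sup le (range x) s -> X s ->
  exists m, forall j, m <= j -> X (x j).
Proof.
  intros [U [V [HU [HV HX]]]] Hx Hs HXs.
  apply HX in HXs. destruct HXs as [k [HUs HVs]].
  destruct (proj2 (HU k) _ _ (chain_directed Hx) Hs HUs) as [y [[m ->] HUm]].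
  exists m. intros j Hmj. apply HX. exists k. split.
  - apply (proj1 (HU k) (x m)); auto using chain_monotone.
  - intro HVj. apply HVs. apply (proj1 (HV k) (x j)); auto.
    apply (proj1 Hs). exists j. reflexivity.
Qed.

Lemma delta02_chain_stabilizes (A : D -> Prop) (x : nat -> D) (s : D) :
  Delta02 le A -> chain x -> is_sup le (range x) s ->
  exists m, (forall j, m <= j -> A (x j)) \/ (forall j, m <= j -> ~ A (x j)).
Proof.
  intros [HS HP] Hx Hs.
  destruct (classic (A s)) as [HAs | HAs].
  - destruct (sigma02_contains_tail HS Hx Hs HAs) as [m Hm]. eauto.
  - destruct (sigma02_contains_tail HP Hx Hs HAs) as [m Hm]. eauto.
Qed.

Lemma delta02_no_alternating_chain (A : D -> Prop) (x : nat -> D) (s : D) :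
  Delta02 le A -> chain x -> is_sup le (range x) s ->
  ~ (forall n, A (x (S n)) <-> ~ A (x n)).
Proof.
  intros HA Hx Hs Halt.
  destruct (delta02_chain_stabilizes HA Hx Hs) as [m [Hin | Hout]].
  - apply (Halt m); auto.
  - apply (Hout (S m)); [lia |]. apply Halt, Hout; auto.
Qed.
End Chains.

Lemma prefix_of_S (Sg : Type) (g : nat -> Sg) (n : nat) :
  prefix_of g (S n) = prefix_of g n ++ [g n].
Proof. unfold prefix_of. rewrite seq_S, map_app. reflexivity. Qed.

Section Branches.
Variables (Sg D : Type).
Variable T : list Sg -> Prop.
Variable f : list Sg -> D.
Variable g : nat -> Sg.
Hypothesis branch : forall n, T (prefix_of g n).

Lemma branch_steps (P : list Sg -> Sg -> Prop) :
  (forall s a, T s -> T (s ++ [a]) -> P s a) ->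
  forall n, P (prefix_of g n) (g n).
Proof. intros HP n. apply HP; [| rewrite <- prefix_of_S]; apply branch. Qed.

Lemma branch_chain (le : D -> D -> Prop) :
  increasing le T f -> chain le (fun n => f (prefix_of g n)).
Proof.
  intros Hinc n. rewrite prefix_of_S.
  exact (branch_steps (fun s a => le (f s) (f (s ++ [a]))) Hinc n).
Qed.

Lemma branch_alternates (A : D -> Prop) (eps : bool) :
  alternating A eps T f ->
  forall n, A (f (prefix_of g (S n))) <-> ~ A (f (prefix_of g n)).
Proof.
  intros [_ Halt] n. rewrite prefix_of_S.
  exact (branch_steps (fun s a => A (f (s ++ [a])) <-> ~ A (f s)) Halt n).
Qed.
End Branches.

Theorem proposition4p6 (D : Type) (le : D -> D -> Prop) (HD : is_dcpo le)
  (B : D -> Prop) (A : D -> Prop) (HA : Delta02 le A)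
  (Sg : Type) (T : list Sg -> Prop) (f : list Sg -> D)
  (Hf : is_B_tree B T f) (Hinc : increasing le T f)
  (Halt : exists eps : bool, alternating A eps T f) :
  tree_well_founded T.
Proof.
  intros [g Hg]. destruct Halt as [eps Heps].
  destruct HD as [[Hrefl [_ Htrans]] Hdcpo].
  set (x := fun n => f (prefix_of g n)).
  assert (Hchain : chain le x) by exact (branch_chain g Hg Hinc).
  destruct (Hdcpo _ (chain_directed Hrefl Htrans Hchain)) as [s Hs].
  exact (delta02_no_alternating_chain Hrefl Htrans HA Hchain Hs
           (branch_alternates g Hg Heps)).
Qed.
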